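(* Fix a nondegenerate triangle $E=E_1E_2E_3$ in the real affine plane and use barycentric coordinates of points with respect to $E$. Call a ''parallel triangle'' any triangle $D=D_1D_2D_3$ whose sides $D_iD_j$ are parallel to $E_iE_j$; such $D$ is the image of $E$ (with $D_i\mapsto E_i$ reversed) under a homothety, i.e. there is a unique real $d\neq 0$ such that the homothety (or translation, when $d=1$) of ratio $d$ maps $D_i$ to $E_i$ for all $i$. If $(d_1,d_2,d_3)$, $d_1+d_2+d_3=1$, are the barycentric coordinates of the centroid of $D$, the barycentric coordinates of $D$ are $(\delta_1,\delta_2,\delta_3)=(d\,d_1,d\,d_2,d\,d_3)$. For parallel triangles $A,B$ define the pre-sum $C=A\boxplus B$ by $C_k=A_iB_j\cap A_jB_i$ for each permutation $(i,j,k)$ of $(1,2,3)$, and define the sum $A+B$ as the triangle obtained from $C$ by the point reflection in the centroid of $C$ (keeping vertex labels). Let $A,B$ be parallel triangles with barycentric coordinates $(\alpha_1,\alpha_2,\alpha_3)$ and $(\beta_1,\beta_2,\beta_3)$ such that the points $C_1,C_2,C_3$ are well defined points of the affine plane forming a nondegenerate triangle. Then $A+B$ is a parallel triangle whose barycentric coordinates are $(\alpha_1+\beta_1,\alpha_2+\beta_2,\alpha_3+\beta_3)$.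
   Context: Barycentric coordinates of a point $X$ with respect to $E$ are the reals $(x_1,x_2,x_3)$ with $x_1+x_2+x_3=1$ and $X=x_1E_1+x_2E_2+x_3E_3$. The centroid of a triangle is the mean of its vertices. *)

From HB Require Import structures.
From mathcomp Require Import all_boot all_order all_algebra.
Set Implicit Arguments. Unset Strict Implicit. Unset Printing Implicit Defensive.
Import Order.TTheory GRing.Theory Num.Theory.
Local Open Scope ring_scope.

Section Defs.
Variable R : realFieldType.
Definition point := 'rV[R]_2.

Definition cross (u v : point) : R :=
  u ord0 ord0 * v ord0 ord_max - u ord0 ord_max * v ord0 ord0.

Definition nondeg (P : 'I_3 -> point) : Prop :=
  cross (P (1%R : 'I_3) - P 0%R) (P (2%:R : 'I_3) - P 0%R) != 0.

Definition centroid (P : 'I_3 -> point) : point := 3%:R^-1 *: \sum_i P i.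

Definition bary (E : 'I_3 -> point) (X : point) (x : 'I_3 -> R) : Prop :=
  \sum_i x i = 1 /\ X = \sum_i x i *: E i.

Definition parallel_tri (E D : 'I_3 -> point) : Prop :=
  nondeg D /\ forall i j : 'I_3, cross (D i - D j) (E i - E j) = 0.

Definition homothety_ratio (E D : 'I_3 -> point) (d : R) : Prop :=
  d != 0 /\ exists t : point, forall i, E i = d *: D i + t.

Definition tri_bary (E D : 'I_3 -> point) (delta : 'I_3 -> R) : Prop :=
  exists (d : R) (dk : 'I_3 -> R),
    homothety_ratio E D d /\ bary E (centroid D) dk /\ forall i, delta i = d * dk i.

Definition on_line (P Q X : point) : Prop := P != Q /\ cross (X - P) (Q - P) = 0.

Definition unique_meet (P Q P' Q' X : point) : Prop :=
  on_line P Q X /\ on_line P' Q' X /\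
  forall Y, on_line P Q Y -> on_line P' Q' Y -> Y = X.

Definition presum (A B C : 'I_3 -> point) : Prop :=
  forall i j k : 'I_3, i != j -> j != k -> i != k ->
    unique_meet (A i) (B j) (A j) (B i) (C k).

Definition tri_sum (C : 'I_3 -> point) : 'I_3 -> point :=
  fun k => 2%:R *: centroid C - C k.
End Defs.

From HB Require Import structures.
From mathcomp Require Import all_boot all_order all_algebra.
From mathcomp Require Import ring.
Set Implicit Arguments. Unset Strict Implicit. Unset Printing Implicit Defensive.
Import Order.TTheory GRing.Theory Num.Theory.
Local Open Scope ring_scope.

(* Writing A_i = a^-1 (E_i - t_A) and B_i = b^-1 (E_i - t_B), where a and b are
   the sums of the barycentric coordinates of A and B, the point
   (a A_i + b B_j) / (a + b) = (E_i + E_j - t_A - t_B) / (a + b) is symmetric in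
   i and j, hence lies on both A_iB_j and A_jB_i and is C_k; for a + b = 0 these
   lines would be distinct parallels.  Since E_i + E_j = E_1 + E_2 + E_3 - E_k,
   the reflection in the centroid of C gives A + B = (a + b)^-1 (E - t), a
   parallel triangle of ratio a + b whose centroid yields coordinates alpha + beta. *)

Section ParallelTriangles.
Variable R : realFieldType.
Implicit Types (P Q X : point R) (u v : point R) (E D : 'I_3 -> point R).

Lemma ord3_cases (k : 'I_3) : [\/ k = 0, k = 1 | k = 2%:R].
Proof.
by case: k => [[|[|[|//]]] ?]; [constructor 1|constructor 2|constructor 3];
  apply/val_inj.
Qed.

Lemma sum_ord3 (V : nmodType) (F : 'I_3 -> V) : \sum_i F i = F 0 + F 1 + F 2%:R.
Proof.
rewrite !big_ord_recr big_ord0 /= add0r.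
by congr (F _ + F _ + F _); apply/val_inj.
Qed.

Lemma crossZl (c : R) u v : cross (c *: u) v = c * cross u v.
Proof. by rewrite /cross !mxE; ring. Qed.

Lemma crossZr (c : R) u v : cross u (c *: v) = c * cross u v.
Proof. by rewrite /cross !mxE; ring. Qed.

Lemma crossvv u : cross u u = 0.
Proof. by rewrite /cross mulrC subrr. Qed.

Lemma on_line_shift P Q X : on_line P Q X -> on_line P Q (X + (Q - P)).
Proof.
move=> [nPQ hX]; split=> //.
by rewrite -hX /cross !mxE; ring.
Qed.

Lemma unique_meet_translate P Q P' Q' X :
  unique_meet P Q P' Q' X -> Q - P != Q' - P'.
Proof.
move=> [lX [l'X uniq]]; apply/eqP => eQ.
have l'X' := on_line_shift l'X; rewrite -eQ in l'X'.
have := uniq _ (on_line_shift lX) l'X'.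
rewrite -{2}(addr0 X) => /addrI /eqP; rewrite subr_eq0 eq_sym.
by apply/negP; case: lX.
Qed.

Lemma on_line_barycenter P Q (a b : R) :
  P != Q -> a + b != 0 -> on_line P Q ((a + b)^-1 *: (a *: P + b *: Q)).
Proof.
move=> nPQ ab0; split=> //.
have -> : (a + b)^-1 *: (a *: P + b *: Q) - P = (b / (a + b)) *: (Q - P).
  by apply/rowP => k; rewrite !mxE; field.
by rewrite crossZl crossvv mulr0.
Qed.

Lemma unique_meet_barycenter (a b : R) P Q P' Q' X :
  a != 0 -> a *: P + b *: Q = a *: P' + b *: Q' -> unique_meet P Q P' Q' X ->
  a + b != 0 /\ X = (a + b)^-1 *: (a *: P + b *: Q).
Proof.
move=> a0 eS hX; have [[nPQ _] [[nPQ' _] uniq]] := hX.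
have ab0 : a + b != 0.
  apply: contraNneq (unique_meet_translate hX) => /eqP.
  rewrite addrC addr_eq0 => /eqP b_opp.
  move: eS; rewrite b_opp !scaleNr -!scalerBr => /(scalerI a0) ePQ.
  by rewrite -opprB ePQ opprB.
split=> //; symmetry; apply: uniq; first exact: on_line_barycenter.
by rewrite eS; exact: on_line_barycenter.
Qed.

Definition homothety_source E (d : R) (t : point R) : 'I_3 -> point R :=
  fun i => d^-1 *: (E i - t).

Lemma homothety_sourceK E d t i :
  d != 0 -> d *: homothety_source E d t i = E i - t.
Proof. by move=> d0; apply: scalerKV. Qed.

Lemma homothety_source_sub E d t i j :
  homothety_source E d t i - homothety_source E d t j = d^-1 *: (E i - E j).
Proof. by rewrite -scalerBr opprB addrA subrK. Qed.

Lemma eq_centroid D D' : D =1 D' -> centroid D = centroid D'.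
Proof. by move=> eD; rewrite /centroid; under eq_bigr do rewrite eD. Qed.

Lemma centroid_homothety_source E d t :
  centroid (homothety_source E d t) = d^-1 *: (centroid E - t).
Proof.
rewrite /centroid /homothety_source -scaler_sumr scalerA mulrC -scalerA.
congr (_ *: _); have n3 : (3%:R : R) != 0 by rewrite pnatr_eq0.
by rewrite !sum_ord3; apply/rowP => k; rewrite !mxE; field.
Qed.

Lemma parallel_tri_homothety_source E D d t :
  nondeg E -> d != 0 -> D =1 homothety_source E d t -> parallel_tri E D.
Proof.
move=> nE d0 hD; split=> [|i j].
  rewrite /nondeg !hD !homothety_source_sub crossZl crossZr.
  by rewrite !mulf_neq0 // invr_neq0.
by rewrite !hD homothety_source_sub crossZl crossvv mulr0.
Qed.

Lemma tri_baryP E D delta :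
  tri_bary E D delta <->
  exists t, [/\ \sum_i delta i != 0, D =1 homothety_source E (\sum_i delta i) t
              & \sum_i delta i *: E i = centroid E - t].
Proof.
split=> [[d [dk [[d0 [t hE]] [[sdk hdk] hdelta]]]] | [t [d0 hD hdE]]].
  have sdelta : \sum_i delta i = d.
    by under eq_bigr do rewrite hdelta; rewrite -mulr_sumr sdk mulr1.
  have hD : D =1 homothety_source E d t.
    by move=> i; rewrite /homothety_source hE addrK scalerA mulVf // scale1r.
  exists t; rewrite sdelta; split=> //.
  under eq_bigr do rewrite hdelta -scalerA.
  by rewrite -scaler_sumr -hdk (eq_centroid hD) centroid_homothety_source scalerA divff // scale1r.
set d := \sum_i delta i.
exists d, (fun i => delta i / d); split; last split.
- by split=> //; exists t => i; rewrite hD homothety_sourceK // subrK.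
- split; first by rewrite -mulr_suml divff.
  under eq_bigr do rewrite mulrC -scalerA.
  by rewrite -scaler_sumr hdE (eq_centroid hD) centroid_homothety_source.
- by move=> i; rewrite mulrC divfK.
Qed.

Lemma unique_meet_homothety_source E A B a b tA tB i j X :
  a != 0 -> b != 0 ->
  A =1 homothety_source E a tA -> B =1 homothety_source E b tB ->
  unique_meet (A i) (B j) (A j) (B i) X ->
  a + b != 0 /\ X = (a + b)^-1 *: (E i + E j - (tA + tB)).
Proof.
move=> a0 b0 hA hB hX.
have eS : a *: A i + b *: B j = a *: A j + b *: B i.
  by rewrite !hA !hB !homothety_sourceK // addrACA [X in _ = X]addrACA (addrC (E j)).
have [ab0 ->] := unique_meet_barycenter a0 eS hX.
by rewrite hA hB !homothety_sourceK // addrACA opprD.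
Qed.

Lemma presum_homothety_source E A B C a b tA tB :
  a != 0 -> b != 0 ->
  A =1 homothety_source E a tA -> B =1 homothety_source E b tB ->
  presum A B C ->
  a + b != 0 /\ forall k, C k = (a + b)^-1 *: (\sum_i E i - E k - (tA + tB)).
Proof.
move=> a0 b0 hA hB hC.
have meet (i j k : 'I_3) (ij : i != j) (jk : j != k) (ik : i != k) :=
  unique_meet_homothety_source a0 b0 hA hB (hC i j k ij jk ik).
split; first by have [] := meet 0 1 2%:R isT isT isT.
move=> k; rewrite sum_ord3; case: (ord3_cases k) => ->.
- have [_ ->] := meet 1 2%:R 0 isT isT isT; congr (_ *: (_ - _)).
  by apply/esym; rewrite (addrAC (E 0 + E 1)) (addrAC (E 0)) subrr add0r.
- have [_ ->] := meet 0 2%:R 1 isT isT isT; congr (_ *: (_ - _)).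
  by apply/esym; rewrite addrAC addrK.
- have [_ ->] := meet 0 1 2%:R isT isT isT; congr (_ *: (_ - _)).
  by rewrite addrK.
Qed.

Lemma tri_sum_homothety_source E C d t :
  d != 0 -> (forall k, C k = d^-1 *: (\sum_i E i - E k - t)) ->
  tri_sum C =1 homothety_source E d (t - centroid E).
Proof.
move=> d0 hC k; have n3 : (3%:R : R) != 0 by rewrite pnatr_eq0.
rewrite /tri_sum /centroid /homothety_source sum_ord3 !hC sum_ord3.
by apply/rowP => l; rewrite !mxE; field.
Qed.

End ParallelTriangles.

Theorem theorem5 (R : realFieldType) (E A B C : 'I_3 -> point R)
    (alpha beta : 'I_3 -> R) :
  nondeg E ->
  parallel_tri E A -> tri_bary E A alpha ->
  parallel_tri E B -> tri_bary E B beta ->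
  presum A B C -> nondeg C ->
  parallel_tri E (tri_sum C) /\
  tri_bary E (tri_sum C) (fun i => alpha i + beta i).
Proof.
move=> nE _ /tri_baryP [tA [a0 hA sA]] _ /tri_baryP [tB [b0 hB sB]] hC _.
have [ab0 hCk] := presum_homothety_source a0 b0 hA hB hC.
have hD := tri_sum_homothety_source ab0 hCk.
split; first exact: parallel_tri_homothety_source hD.
apply/tri_baryP; exists (tA + tB - centroid E); rewrite big_split /=; split=> //.
under eq_bigr do rewrite scalerDl.
rewrite big_split /= sA sB.
by apply/rowP => k; rewrite !mxE; ring.
Qed.
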